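(* Let $n\ge 1$ and $m\ge 2$ be integers with $m\nmid n$, let $\ell=\lfloor n/m\rfloor$, and let $k\ge 1$. Then the $k$-fold composition $\chi_{n,m}^k$ satisfies $$\chi_{n,m}^k=\sum_{j=0}^{\min\{k,\ell\}}a_j\theta_{m,j},$$ where $a_j\in\mathbb{F}_2$ and $a_j=1$ if and only if $j\preceq k$.
   Context: Indices of coordinates of $x\in\mathbb{F}_2^n$ are taken modulo $n$. $\chi_{n,m}\colon\mathbb{F}_2^n\to\mathbb{F}_2^n$ is given by $\chi_{n,m}(x)=y$ with $y_i=x_i+x_{i+m}(x_{i+m-1}+1)\cdots(x_{i+1}+1)$. For a nonnegative integer $k$, $\theta_{m,k}(x)=y$ with $y_i=x_{i+mk}\prod_{1\le j\le mk-1,\ m\nmid j}(x_{i+j}+1)$; $\theta_{m,0}$ is the identity map. Sums of maps are pointwise sums. For nonnegative integers $j,k$ with binary expansions $j=\sum_i j_i2^i$, $k=\sum_i k_i2^i$ ($j_i,k_i\in\{0,1\}$), $j\preceq k$ means $j_i\le k_i$ for all $i$. *)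

From HB Require Import structures.
From mathcomp Require Import all_boot all_order all_algebra.
Set Implicit Arguments. Unset Strict Implicit. Unset Printing Implicit Defensive.
Import GRing.Theory.
Local Open Scope ring_scope.

(* Vectors of F_2^n are row vectors 'rV['F_2]_n; coordinate i is x 0 i. *)

Lemma ord_pos n (i : 'I_n) : (0 < n)%N.
Proof. by case: i => [[|k]] /= H; apply: leq_ltn_trans H. Qed.

Definition sh n (i : 'I_n) (k : nat) : 'I_n :=
  Ordinal (ltn_pmod (i + k)%N (ord_pos i)).

Definition chi (n m : nat) (x : 'rV['F_2]_n) : 'rV['F_2]_n :=
  \row_i (x 0 i + x 0 (sh i m) * \prod_(1 <= j < m) (x 0 (sh i j) + 1)).

Definition theta (n m k : nat) (x : 'rV['F_2]_n) : 'rV['F_2]_n :=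
  if k is 0 then x else
  \row_i (x 0 (sh i (m * k)) *
          \prod_(1 <= j < m * k | ~~ (m %| j)%N) (x 0 (sh i j) + 1)).

Definition bin_preceq (j k : nat) : Prop :=
  forall i : nat, ((j %/ 2 ^ i) %% 2 <= (k %/ 2 ^ i) %% 2)%N.

(* Since chi = id + theta_1, the theorem follows from the identity
   theta_1 (sum_j a_j theta_j) = sum_j a_j theta_(j+1), valid whenever a_0 = 1:
   by induction chi^k = sum_j C(k, j) theta_j, with C(k, j) odd iff j <= k
   bitwise (Lucas), and theta_j = 0 once mj > n, because m does not divide n and
   by periodicity the bit at offset mj is then the bit at offset mj - n, which
   theta_j requires to vanish.
   For the identity at position i: if x_(i+t) = 1 for some 0 < t < m, both sides
   vanish, since either the combination is 1 at i + t or some theta_j with j >= 1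
   fires at i + t, which forces the combination to vanish at i + m; otherwise
   theta_j at i + m is theta_(j+1) at i. *)

From HB Require Import structures.
From mathcomp Require Import all_boot all_order all_algebra.
From mathcomp Require Import zify.
Set Implicit Arguments. Unset Strict Implicit.
Import GRing.Theory.
Local Open Scope ring_scope.

Lemma odd_bin_doubleS a c : odd 'C(a.*2, c.*2.+1) = false.
Proof.
(* (2c + 1) 'C(2a, 2c + 1) = 2a 'C(2a - 1, 2c) *)
have := congr1 odd (mul_bin_diag a.*2 c.*2).
by rewrite oddM odd_double /= oddM /= odd_double /= => ->.
Qed.

Lemma odd_bin_double a c : odd 'C(a.*2, c.*2) = odd 'C(a, c).
Proof.
elim: a c => [|a IHa] [|c] //; rewrite ?bin0 //.
by rewrite !doubleS !binS -doubleS !oddD !odd_bin_doubleS !IHa addbF.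
Qed.

Lemma odd_bin_digits a c (b d : bool) :
  odd 'C(b + a.*2, d + c.*2) = odd 'C(a, c) && (d <= b)%N.
Proof.
case: b; case: d; rewrite /= ?add0n ?add1n ?andbT ?andbF.
- by rewrite binS oddD odd_bin_doubleS odd_bin_double.
- case: c => [|c]; first by rewrite !bin0.
  by rewrite doubleS binS -doubleS oddD odd_bin_double odd_bin_doubleS addbF.
- exact: odd_bin_doubleS.
- exact: odd_bin_double.
Qed.

Lemma odd_bin_half k j : odd 'C(k, j) = odd 'C(k./2, j./2) && (odd j <= odd k)%N.
Proof.
by rewrite -{1}[k]odd_double_half -{1}[j]odd_double_half odd_bin_digits.
Qed.

Lemma bin_preceq_half j k :
  bin_preceq j k <-> (odd j <= odd k)%N /\ bin_preceq j./2 k./2.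
Proof.
have digitS x i : (x %/ 2 ^ i.+1 = x./2 %/ 2 ^ i)%N by rewrite expnS divnMA divn2.
have digit0 x : ((x %/ 2 ^ 0) %% 2 = odd x)%N by rewrite expn0 divn1 modn2.
split=> [prec | [odd_le prec] [|i]].
- split=> [|i]; first by have := prec 0%N; rewrite !digit0.
  by have := prec i.+1; rewrite !digitS.
- by rewrite !digit0.
- by rewrite !digitS.
Qed.

Lemma odd_binP k j : reflect (bin_preceq j k) (odd 'C(k, j)).
Proof.
elim/ltn_ind: j k => j IHj k.
have [-> | j_gt0] := posnP j.
  by rewrite bin0; constructor => i; rewrite div0n mod0n.
have half_lt : (j./2 < j)%N by rewrite -divn2 ltn_Pdiv.
rewrite odd_bin_half; apply: (iffP andP) => [[/(IHj _ half_lt) prec odd_le] |].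
  exact/bin_preceq_half.
by case/bin_preceq_half => odd_le /(IHj _ half_lt).
Qed.

Lemma F2_cases (a : 'F_2) : a = 0 \/ a = 1.
Proof. by case: a => [[|[|a]] //= lt_a]; [left | right]; apply/val_inj. Qed.

Lemma F2_eq1 (a : 'F_2) : a != 0 -> a = 1.
Proof. by case: (F2_cases a) => ->. Qed.

Lemma F2_natE n : n%:R = (odd n)%:R :> 'F_2.
Proof. by rewrite -Fp_nat_mod // modn2. Qed.

Lemma sumr_neq0_exists (V : nmodType) (I : finType) (F : I -> V) :
  \sum_(i : I) F i != 0 -> exists i, F i != 0.
Proof.
move=> sum_neq0; apply/existsP; apply: contraNT sum_neq0 => /existsPn F0.
by apply/eqP/big1 => i _; apply/eqP/negPn/F0.
Qed.

Definition vanish_off (m : nat) (X : nat -> 'F_2) (p N : nat) : 'F_2 :=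
  \prod_(1 <= t < N | ~~ (m %| t)%N) (X (p + t)%N + 1).

Definition theta_seq (m j : nat) (X : nat -> 'F_2) (p : nat) : 'F_2 :=
  X (p + m * j)%N * vanish_off m X p (m * j).

Section ThetaSeq.
Variables (m : nat) (X : nat -> 'F_2).

Lemma vanish_off_eq1 p N :
  (forall t, (0 < t < N)%N -> ~~ (m %| t)%N -> X (p + t)%N = 0) ->
  vanish_off m X p N = 1.
Proof.
move=> X0; rewrite /vanish_off big_nat_cond; apply: big1 => t /andP[t_range ndvd].
by rewrite X0 // add0r.
Qed.

Lemma vanish_off_eq0 p N t :
  (0 < t < N)%N -> ~~ (m %| t)%N -> X (p + t)%N = 1 -> vanish_off m X p N = 0.
Proof.
move=> t_range ndvd Xt; rewrite /vanish_off big_mkcond (bigD1_seq t) /=.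
- by rewrite ndvd Xt (addrr_pchar2 (pchar_Fp (isT : prime 2))) mul0r.
- by rewrite mem_index_iota.
- exact: iota_uniq.
Qed.

Lemma vanish_off1_eq0 p N t :
  vanish_off m X p N = 1 -> (0 < t < N)%N -> ~~ (m %| t)%N -> X (p + t)%N = 0.
Proof.
move=> V1 t_range ndvd; case: (F2_cases (X (p + t)%N)) => // Xt.
move: V1; rewrite (vanish_off_eq0 t_range ndvd Xt) => /eqP.
by rewrite eq_sym oner_eq0.
Qed.

Lemma vanish_off_split p N : (0 < m)%N ->
  vanish_off m X p (m + N) = vanish_off m X p m * vanish_off m X (p + m) N.
Proof.
move=> m_gt0; rewrite /vanish_off (@big_cat_nat _ _ _ m) //=; last by lia.
congr (_ * _); rewrite -{1}(add0n m) big_addn addKn.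
case: N => [|N]; first by rewrite !big_geq.
rewrite big_ltn_cond // add0n dvdnn /=.
apply: eq_big => [t | t _]; first by rewrite dvdn_addl.
by rewrite -addnA (addnC t).
Qed.

Lemma theta_seq_eq0 j p t : (0 < t < m * j)%N -> ~~ (m %| t)%N ->
  X (p + t)%N = 1 -> theta_seq m j X p = 0.
Proof.
move=> t_range ndvd Xt.
by rewrite /theta_seq (vanish_off_eq0 t_range ndvd Xt) mulr0.
Qed.

Lemma theta_seq_eq1 j p : theta_seq m j X p = 1 ->
  X (p + m * j)%N = 1 /\ vanish_off m X p (m * j) = 1.
Proof.
move=> th1; have : theta_seq m j X p != 0 by rewrite th1 oner_eq0.
by rewrite mulf_eq0 negb_or => /andP[/F2_eq1 ? /F2_eq1].
Qed.

Lemma theta_seq_shift j p : (0 < m)%N ->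
  (forall t, (0 < t < m)%N -> X (p + t)%N = 0) ->
  theta_seq m j X (p + m) = theta_seq m j.+1 X p.
Proof.
move=> m_gt0 X0; rewrite /theta_seq mulnS vanish_off_split // addnA.
by rewrite (@vanish_off_eq1 p m) ?mul1r // => t t_range _; apply: X0.
Qed.

Lemma theta_seq_gap j j' q d : theta_seq m j X q = 1 ->
  (0 < d < m * j)%N -> ~~ (m %| d)%N -> theta_seq m j' X (q + d) = 0.
Proof.
move=> /theta_seq_eq1 [Xqj Vq] d_range d_ndvd.
have m_dvd k : (m %| m * k)%N by apply: dvdn_mulr.
have [lt | ge] := ltnP (d + m * j') (m * j).
  rewrite /theta_seq -addnA (vanish_off1_eq0 Vq) ?mul0r ?dvdn_addl //; lia.
have ndvd : ~~ (m %| m * j - d)%N by rewrite dvdn_subr //; lia.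
have ne : (m * j - d != m * j')%N by apply: contraNneq ndvd => ->.
apply: (@theta_seq_eq0 _ _ (m * j - d)) => //; first by move: ne; lia.
by rewrite -addnA subnKC //; lia.
Qed.

Lemma theta_seq_periodic_eq0 n j p : (forall q, X (q + n)%N = X q) ->
  (n < m * j)%N -> ~~ (m %| n)%N -> theta_seq m j X p = 0.
Proof.
move=> X_per n_lt n_ndvd.
have n_gt0 : (0 < n)%N by rewrite lt0n; apply: contraNneq n_ndvd => ->.
have t_ndvd : ~~ (m %| m * j - n)%N by rewrite dvdn_subr ?dvdn_mulr // ltnW.
have X_mj : X (p + m * j)%N = X (p + (m * j - n))%N.
  by rewrite -[RHS]X_per -addnA subnK // ltnW.
case: (F2_cases (X (p + (m * j - n))%N)) => Xt; last first.
  by apply: (theta_seq_eq0 _ t_ndvd Xt); lia.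
by rewrite /theta_seq X_mj Xt mul0r.
Qed.
End ThetaSeq.

Section ThetaOneComb.
Variables (m L : nat) (a : nat -> 'F_2) (X Y : nat -> 'F_2).
Hypothesis m_gt0 : (0 < m)%N.
Hypothesis Y_def : forall p, Y p = \sum_(j < L.+1) a j * theta_seq m j X p.

Lemma theta1_comb_hit i t : a 0%N = 1 -> (0 < t < m)%N -> X (i + t)%N = 1 ->
  theta_seq m 1 Y i = 0.
Proof.
move=> a0 /andP[t_gt0 t_lt] Xt; have t_ndvd : ~~ (m %| t)%N by rewrite gtnNdvd.
case: (F2_cases (Y (i + t)%N)) => Yt; last first.
  by apply: (theta_seq_eq0 _ t_ndvd Yt); rewrite muln1 t_gt0.
have : \sum_(j < L) a j.+1 * theta_seq m j.+1 X (i + t) != 0.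
  apply/eqP => tail0; move: Yt.
  rewrite Y_def big_ord_recl tail0 a0 /theta_seq muln0 addn0 Xt.
  by rewrite /vanish_off big_geq.
case/sumr_neq0_exists => j; rewrite mulf_eq0 negb_or => /andP[_ /F2_eq1 th1].
have Y0 : Y (i + m)%N = 0.
  rewrite Y_def; apply: big1 => j' _.
  have -> : (i + m = i + t + (m - t))%N by lia.
  rewrite (theta_seq_gap j' th1) ?mulr0 ?dvdn_subr ?t_ndvd //; lia.
by rewrite /theta_seq muln1 Y0 mul0r.
Qed.

Lemma theta1_comb_clear i : (forall t, (0 < t < m)%N -> X (i + t)%N = 0) ->
  theta_seq m 1 Y i = \sum_(j < L.+1) a j * theta_seq m j.+1 X i.
Proof.
move=> X0; have Ym : Y (i + m)%N = \sum_(j < L.+1) a j * theta_seq m j.+1 X i.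
  by rewrite Y_def; apply: eq_bigr => j _; rewrite theta_seq_shift.
rewrite {1}/theta_seq muln1 Ym.
case: (F2_cases (\sum_(j < L.+1) a j * theta_seq m j.+1 X i)) => [-> | S1].
  by rewrite mul0r.
rewrite S1 vanish_off_eq1 ?mulr1 // => t /andP[t_gt0 t_lt] _.
have [j] : exists j : 'I_L.+1, a j * theta_seq m j.+1 X i != 0.
  by apply: sumr_neq0_exists; rewrite S1 oner_eq0.
rewrite mulf_eq0 negb_or => /andP[_ /F2_eq1 th1].
rewrite Y_def; apply: big1 => j' _.
rewrite (theta_seq_gap j' th1) ?mulr0 ?gtnNdvd ?t_gt0 //.
by apply: (leq_trans t_lt); rewrite leq_pmulr.
Qed.

Lemma theta1_comb i : a 0%N = 1 ->
  theta_seq m 1 Y i = \sum_(j < L.+1) a j * theta_seq m j.+1 X i.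
Proof.
move=> a0.
case: (pickP (fun t : 'I_m => (0 < t)%N && (X (i + t)%N == 1))) => [t | no_hit].
  case/andP=> t_gt0 /eqP Xt; rewrite (theta1_comb_hit a0 _ Xt) ?t_gt0 ?ltn_ord //.
  apply/esym/big1 => j _.
  rewrite (theta_seq_eq0 _ _ Xt) ?mulr0 ?gtnNdvd ?t_gt0 //.
  by apply: (leq_trans (ltn_ord t)); rewrite leq_pmulr.
apply: theta1_comb_clear => t /andP[t_gt0 t_lt].
have := no_hit (Ordinal t_lt); rewrite /= t_gt0 /=.
by case: (F2_cases (X (i + t)%N)) => ->.
Qed.

End ThetaOneComb.

Section Rows.
Variables (n m : nat) (n_gt0 : (0 < n)%N).

Definition row_seq (x : 'rV['F_2]_n) (p : nat) : 'F_2 :=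
  x 0 (Ordinal (ltn_pmod p n_gt0)).

Lemma row_seq_ord (x : 'rV['F_2]_n) (i : 'I_n) : row_seq x i = x 0 i.
Proof. by congr (x 0 _); apply/val_inj; rewrite /= modn_small. Qed.

Lemma row_seq_inj (x y : 'rV['F_2]_n) :
  (forall p, row_seq x p = row_seq y p) -> x = y.
Proof. by move=> xy; apply/rowP => i; rewrite -!row_seq_ord. Qed.

Lemma row_seq_periodic (x : 'rV['F_2]_n) p : row_seq x (p + n) = row_seq x p.
Proof. by congr (x 0 _); apply/val_inj; rewrite /= modnDr. Qed.

Lemma row_seq_sh (x : 'rV['F_2]_n) p k :
  x 0 (sh (Ordinal (ltn_pmod p n_gt0)) k) = row_seq x (p + k).
Proof. by congr (x 0 _); apply/val_inj; rewrite /= modnDml. Qed.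

Lemma row_seq_comb N (a : nat -> 'F_2) (v : nat -> 'rV['F_2]_n) p :
  row_seq (\sum_(j < N) a j *: v j) p = \sum_(j < N) a j * row_seq (v j) p.
Proof. by rewrite /row_seq summxE; apply: eq_bigr => j _; rewrite mxE. Qed.

Lemma row_seq_theta j (x : 'rV['F_2]_n) p :
  row_seq (theta m j x) p = theta_seq m j (row_seq x) p.
Proof.
case: j => [|j].
  by rewrite /theta_seq muln0 addn0 /vanish_off big_geq ?mulr1.
rewrite {1}/row_seq mxE row_seq_sh; congr (_ * _); apply: eq_bigr => t _.
by rewrite row_seq_sh.
Qed.

Lemma chi_theta1 (x : 'rV['F_2]_n) : chi m x = x + theta m 1 x.
Proof.
apply/rowP => i; rewrite !mxE muln1; congr (_ + _ * _).
rewrite [RHS]big_nat_cond [LHS]big_nat_cond; apply: eq_bigl => t.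
by case: (boolP (1 <= t < m)%N) => //= /andP[t_gt0 t_lt]; rewrite gtnNdvd.
Qed.

Hypothesis m_gt0 : (0 < m)%N.

Lemma theta1_comb_row L (a : nat -> 'F_2) (x : 'rV['F_2]_n) : a 0%N = 1 ->
  theta m 1 (\sum_(j < L.+1) a j *: theta m j x) =
  \sum_(j < L.+1) a j *: theta m j.+1 x.
Proof.
move=> a0; apply: row_seq_inj => p.
rewrite row_seq_theta (row_seq_comb _ _ (fun j => theta m j.+1 x)).
rewrite (@theta1_comb m L a (row_seq x)) // => [|q].
  by apply: eq_bigr => j _; rewrite row_seq_theta.
rewrite (row_seq_comb _ _ (fun j => theta m j x)).
by apply: eq_bigr => j _; rewrite row_seq_theta.
Qed.

Lemma iter_chi k (x : 'rV['F_2]_n) :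
  iter k (chi m) x = \sum_(j < k.+1) 'C(k, j)%:R *: theta m j x.
Proof.
elim: k => [|k IHk] /=; first by rewrite big_ord1 scale1r.
rewrite chi_theta1 IHk (@theta1_comb_row k (fun j => 'C(k, j)%:R)) ?bin0 //.
rewrite [in RHS]big_ord_recl [X in X + _ = _]big_ord_recl !bin0 -addrA.
congr (_ + _).
rewrite [in RHS](eq_bigr (fun i : 'I_k.+1 =>
  'C(k, i.+1)%:R *: theta m i.+1 x + 'C(k, i)%:R *: theta m i.+1 x)) => [|i _].
  rewrite big_split [X in _ = X + _]big_ord_recr bin_small // scale0r.
  by rewrite Monoid.mulm1; congr (_ + _).
by rewrite lift0 binS natrD scalerDl.
Qed.

Lemma theta_eq0 j (x : 'rV['F_2]_n) :
  (n %/ m < j)%N -> ~~ (m %| n)%N -> theta m j x = 0.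
Proof.
move=> j_gt n_ndvd; apply: row_seq_inj => p; rewrite row_seq_theta.
rewrite [RHS]/row_seq mxE; apply: (theta_seq_periodic_eq0 _ _ _ n_ndvd).
  exact: row_seq_periodic.
by rewrite mulnC -ltn_divLR.
Qed.

End Rows.

Theorem theorem4 (n m k : nat) :
  (1 <= n)%N -> (2 <= m)%N -> ~~ (m %| n)%N -> (1 <= k)%N ->
  exists a : nat -> 'F_2,
    (forall j : nat, (j <= minn k (n %/ m))%N -> (a j = 1 <-> bin_preceq j k)) /\
    forall x : 'rV['F_2]_n,
      iter k (chi m) x =
      \sum_(j < (minn k (n %/ m)).+1) a j *: theta m j x.
Proof.
move=> n_gt0 m_ge2 n_ndvd _; have m_gt0 : (0 < m)%N by apply: ltnW.
exists (fun j => 'C(k, j)%:R); split=> [j _ | x].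
  by rewrite F2_natE; case: odd_binP; split.
rewrite (iter_chi n_gt0 m_gt0).
rewrite [RHS](big_ord_widen k.+1 (fun j => 'C(k, j)%:R *: theta m j x)).
  2: by rewrite ltnS geq_minl.
rewrite [RHS]big_mkcond; apply: eq_bigr => j _; case: ifPn => // j_gt.
rewrite theta_eq0 ?scaler0 //; move: j_gt; rewrite ltnS leq_min negb_and -!ltnNge.
by rewrite ltnNge -ltnS ltn_ord.
Qed.
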